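(* Let $\mathbf P=(P,\leq,{}',0,1)$ be a bounded poset which is the horizontal sum of Boolean posets $\mathbf P_{\alpha}=(P_{\alpha},\leq_{\alpha},{}'_{\alpha},0,1)$, $\alpha\in\Lambda$, and put $M(x,y)=L(U(x,y'),y)$ and $R(x,y)=L(U(L(x,y),x'))$. Then the Dedekind-MacNeille completion $\mathrm{DM}(\mathbf P)$ is a complete orthomodular lattice. Moreover, $\mathrm{DM}(\mathbf P)$ is a left residuated lattice with respect to the operations $x\odot y=(x\vee y')\wedge y$ and $x\to y=(x\wedge y)\vee x'$ obtained from $M$ and $R$ by the DM-transformation.
   Context: For $M\subseteq P$, $U(M)$ and $L(M)$ are the sets of upper and lower bounds of $M$; $U(a,b)=U(\{a,b\})$, $L(a,b)=L(\{a,b\})$. A poset with complementation is a bounded poset with antitone involution $'$ ($x\le y\Rightarrow y'\le x'$, $x''=x$) with $L(x,x')=\{0\}$, $U(x,x')=\{1\}$. A Boolean poset is a bounded poset with complementation $'$ that is distributive, i.e. $L(U(x,y),z)=L(U(L(x,z),L(y,z)))$ for all $x,y,z$. The horizontal sum of bounded posets is their disjoint union with bottoms identified to $0$ and tops identified to $1$. The Dedekind-MacNeille completion $\mathrm{DM}(\mathbf P)$ is the complete lattice of subsets $B\subseteq P$ with $L(U(B))=B$ ordered by inclusion, $P$ embedded via $x\mapsto L(\{x\})$, with antitone involution $X'=L(\{u'\mid u\in X\})$. The DM-transformation replaces $U(x,y)$ or $LU(x,y)$ by $x\vee y$ and $L(x,y)$ by $x\wedge y$. A lattice with complementation is orthomodular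 if $x\vee y=((x\vee y)\wedge y')\vee y$. A lattice with top $1$ is left residuated with respect to binary operations $\odot,\to$ if $x\odot 1=x=1\odot x$ and $x\odot y\le z \iff x\le y\to z$ for all $x,y,z$ ($\odot$ need not be associative or commutative). *)

Set Implicit Arguments.

Definition pair2 {T : Type} (a b : T) : T -> Prop := fun x => x = a \/ x = b.
Definition single {T : Type} (a : T) : T -> Prop := fun x => x = a.
Definition union {T : Type} (M N : T -> Prop) : T -> Prop := fun x => M x \/ N x.
Definition inter {T : Type} (M N : T -> Prop) : T -> Prop := fun x => M x /\ N x.

Definition Lb {T : Type} (le : T -> T -> Prop) (M : T -> Prop) : T -> Prop :=
  fun x => forall m, M m -> le x m.
Definition Ub {T : Type} (le : T -> T -> Prop) (M : T -> Prop) : T -> Prop :=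
  fun x => forall m, M m -> le m x.

Definition LA {T : Type} (A : T -> Prop) (le : T -> T -> Prop) (M : T -> Prop)
  : T -> Prop := fun x => A x /\ Lb le M x.
Definition UA {T : Type} (A : T -> Prop) (le : T -> T -> Prop) (M : T -> Prop)
  : T -> Prop := fun x => A x /\ Ub le M x.

Definition bounded_poset_on {T : Type} (A : T -> Prop) (le : T -> T -> Prop)
  (z o : T) : Prop :=
  A z /\ A o /\
  (forall x, A x -> le x x) /\
  (forall x y, A x -> A y -> le x y -> le y x -> x = y) /\
  (forall x y w, A x -> A y -> A w -> le x y -> le y w -> le x w) /\
  (forall x, A x -> le z x /\ le x o).

Definition complementation_on {T : Type} (A : T -> Prop) (le : T -> T -> Prop)
  (c : T -> T) (z o : T) : Prop :=
  (forall x, A x -> A (c x)) /\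
  (forall x y, A x -> A y -> le x y -> le (c y) (c x)) /\
  (forall x, A x -> c (c x) = x) /\
  (forall x, A x -> forall y, LA A le (pair2 x (c x)) y <-> y = z) /\
  (forall x, A x -> forall y, UA A le (pair2 x (c x)) y <-> y = o).

(* L(U(x,y),w) = L(U(L(x,w),L(y,w))) computed inside A *)
Definition distributive_on {T : Type} (A : T -> Prop) (le : T -> T -> Prop) : Prop :=
  forall x y w, A x -> A y -> A w -> forall t,
    LA A le (union (UA A le (pair2 x y)) (single w)) t <->
    LA A le (UA A le (union (LA A le (pair2 x w)) (LA A le (pair2 y w)))) t.

Definition boolean_poset_on {T : Type} (A : T -> Prop) (le : T -> T -> Prop)
  (c : T -> T) (z o : T) : Prop :=
  bounded_poset_on A le z o /\ complementation_on A le c z o /\ distributive_on A le.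

(* (T, le, c, z, o) is the horizontal sum of the Boolean posets
   (P i, le|P i, c|P i, z, o), i : I  (internal description). *)
Definition horizontal_sum_of {T I : Type} (le : T -> T -> Prop) (c : T -> T)
  (z o : T) (P : I -> T -> Prop) : Prop :=
  bounded_poset_on (fun _ => True) le z o /\
  (forall i, boolean_poset_on (P i) le c z o) /\
  (forall x, exists i, P i x) /\
  (forall i j x, i <> j -> P i x -> P j x -> x = z \/ x = o) /\
  (forall x y, le x y -> x = z \/ y = o \/ exists i, P i x /\ P i y).

Definition dm_closed {T : Type} (le : T -> T -> Prop) (B : T -> Prop) : Prop :=
  forall x, Lb le (Ub le B) x <-> B x.

Definition DM {T : Type} (le : T -> T -> Prop) := { B : T -> Prop | dm_closed le B }.

Definition dm_le {T : Type} {le : T -> T -> Prop} (X Y : DM le) : Prop :=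
  forall x, proj1_sig X x -> proj1_sig Y x.

Lemma LUL_closed {T : Type} (le : T -> T -> Prop) (M : T -> Prop) :
  dm_closed le (Lb le M).
Proof.
  intro x; split.
  - intros H m Hm. apply H. intros y Hy. exact (Hy m Hm).
  - intros H u Hu. exact (Hu x H).
Qed.

Lemma inter_closed {T : Type} (le : T -> T -> Prop) (X Y : DM le) :
  dm_closed le (inter (proj1_sig X) (proj1_sig Y)).
Proof.
  destruct X as [X HX], Y as [Y HY]; simpl; intro x; split.
  - intro H; split.
    + apply HX; intros u Hu; apply H; intros m [Hm _]; exact (Hu m Hm).
    + apply HY; intros u Hu; apply H; intros m [_ Hm]; exact (Hu m Hm).
  - intros H u Hu; exact (Hu x H).
Qed.

Lemma top_closed {T : Type} (le : T -> T -> Prop) : dm_closed le (fun _ => True).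
Proof. intro x; split; [ intros; exact I | intros _ u Hu; exact (Hu x I) ]. Qed.

Definition dm_meet {T : Type} {le : T -> T -> Prop} (X Y : DM le) : DM le :=
  exist _ (inter (proj1_sig X) (proj1_sig Y)) (inter_closed X Y).
Definition dm_join {T : Type} {le : T -> T -> Prop} (X Y : DM le) : DM le :=
  exist _ (Lb le (Ub le (union (proj1_sig X) (proj1_sig Y))))
          (LUL_closed le (Ub le (union (proj1_sig X) (proj1_sig Y)))).
Definition dm_compl {T : Type} {le : T -> T -> Prop} (c : T -> T) (X : DM le) : DM le :=
  exist _ (Lb le (fun u => exists v, proj1_sig X v /\ u = c v))
          (LUL_closed le (fun u => exists v, proj1_sig X v /\ u = c v)).
Definition dm_top {T : Type} (le : T -> T -> Prop) : DM le :=
  exist _ (fun _ => True) (top_closed le).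
(* least element L(U(empty)) = L(T) *)
Definition dm_bot {T : Type} (le : T -> T -> Prop) : DM le :=
  exist _ (Lb le (fun _ => True)) (LUL_closed le (fun _ => True)).

Definition dm_is_sup {T : Type} {le : T -> T -> Prop} (F : DM le -> Prop) (S : DM le) : Prop :=
  (forall X, F X -> dm_le X S) /\ (forall S', (forall X, F X -> dm_le X S') -> dm_le S S').
Definition dm_is_inf {T : Type} {le : T -> T -> Prop} (F : DM le -> Prop) (S : DM le) : Prop :=
  (forall X, F X -> dm_le S X) /\ (forall S', (forall X, F X -> dm_le S' X) -> dm_le S' S).

(* DM-transforms of M(x,y) = L(U(x,y'),y) and R(x,y) = L(U(L(x,y),x')) *)
Definition dm_odot {T : Type} {le : T -> T -> Prop} (c : T -> T) (X Y : DM le) : DM le :=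
  dm_meet (dm_join X (dm_compl c Y)) Y.
Definition dm_impl {T : Type} {le : T -> T -> Prop} (c : T -> T) (X Y : DM le) : DM le :=
  dm_join (dm_meet X Y) (dm_compl c X).

(** In [DM(P)] the map [X |-> X'] is always antitone; for a horizontal sum of
    Boolean posets it is moreover involutive with [X /\ X' = 0], and
    orthomodularity reduces to the criterion [Y <= W], [W /\ Y' = 0] implies
    [W = Y].  This criterion is checked pointwise: for [w] in [W] and an upper
    bound [u] of [Y], either [w] and [u] lie in a common Boolean block, where
    distributivity gives [w <= u] because only [0] lies below both [w] and [u'],
    or they do not, and then either [Y = 0] and [w] itself lies in
    [W /\ Y' = 0], or the blocks force [W] to be all of [P], putting the
    nonzero element [u'] into [W /\ Y'].  Left residuation of
    [x . y = (x \/ y') /\ y] and [x -> y = (x /\ y) \/ x'] holds in every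
    orthomodular lattice. *)

From Stdlib Require Import Classical FunctionalExtensionality PropExtensionality ProofIrrelevance.

Section DMLattice.

Context {T : Type} {le : T -> T -> Prop}.

Lemma dm_ext (X Y : DM le) :
  (forall x, proj1_sig X x <-> proj1_sig Y x) -> X = Y.
Proof.
  destruct X as [X HX], Y as [Y HY]; simpl; intro H.
  assert (X = Y) as <-.
  { apply functional_extensionality; intro x; apply propositional_extensionality; auto. }
  f_equal; apply proof_irrelevance.
Qed.

Lemma dm_le_refl (X : DM le) : dm_le X X.
Proof. intros x H; exact H. Qed.

Lemma dm_le_trans (X Y Z : DM le) : dm_le X Y -> dm_le Y Z -> dm_le X Z.
Proof. intros H1 H2 x Hx; auto. Qed.

Lemma dm_le_antisym (X Y : DM le) : dm_le X Y -> dm_le Y X -> X = Y.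
Proof. intros H1 H2; apply dm_ext; intro x; split; auto. Qed.

Lemma mem_LU (B : T -> Prop) x : B x -> Lb le (Ub le B) x.
Proof. intros H u Hu; exact (Hu x H). Qed.

Lemma dm_meet_l (X Y : DM le) : dm_le (dm_meet X Y) X.
Proof. intros x [H _]; exact H. Qed.

Lemma dm_meet_r (X Y : DM le) : dm_le (dm_meet X Y) Y.
Proof. intros x [_ H]; exact H. Qed.

Lemma dm_meet_glb (X Y W : DM le) :
  dm_le W X -> dm_le W Y -> dm_le W (dm_meet X Y).
Proof. intros H1 H2 x Hx; split; auto. Qed.

Lemma dm_join_l (X Y : DM le) : dm_le X (dm_join X Y).
Proof. intros x Hx; apply mem_LU; left; exact Hx. Qed.

Lemma dm_join_r (X Y : DM le) : dm_le Y (dm_join X Y).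
Proof. intros x Hx; apply mem_LU; right; exact Hx. Qed.

Lemma dm_join_lub (X Y W : DM le) :
  dm_le X W -> dm_le Y W -> dm_le (dm_join X Y) W.
Proof.
  destruct W as [W HW]; simpl; intros H1 H2 x Hx.
  apply HW; intros u Hu; apply Hx.
  intros m [Hm|Hm]; apply Hu; [apply H1 | apply H2]; exact Hm.
Qed.

Lemma dm_bot_le (X : DM le) : dm_le (dm_bot le) X.
Proof.
  destruct X as [X HX]; simpl; intros x Hx.
  apply HX; intros u _; apply Hx; exact I.
Qed.

Lemma dm_le_top (X : DM le) : dm_le X (dm_top le).
Proof. intros x _; exact I. Qed.

Lemma dm_join_bot_r (X : DM le) : dm_join X (dm_bot le) = X.
Proof.
  apply dm_le_antisym; [apply dm_join_lub; [apply dm_le_refl | apply dm_bot_le] | apply dm_join_l].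
Qed.

Lemma dm_join_top_l (X : DM le) : dm_join (dm_top le) X = dm_top le.
Proof. apply dm_le_antisym; [apply dm_le_top | apply dm_join_l]. Qed.

Lemma dm_meet_top_r (X : DM le) : dm_meet X (dm_top le) = X.
Proof.
  apply dm_le_antisym; [apply dm_meet_l | apply dm_meet_glb; [apply dm_le_refl | apply dm_le_top]].
Qed.

Lemma dm_meet_top_l (X : DM le) : dm_meet (dm_top le) X = X.
Proof.
  apply dm_le_antisym; [apply dm_meet_r | apply dm_meet_glb; [apply dm_le_top | apply dm_le_refl]].
Qed.

Lemma dm_join_is_sup (X Y : DM le) : dm_is_sup (pair2 X Y) (dm_join X Y).
Proof.
  split.
  - intros W [-> | ->]; [apply dm_join_l | apply dm_join_r].
  - intros S HS; apply dm_join_lub; apply HS; [left | right]; reflexivity.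
Qed.

Lemma dm_meet_is_inf (X Y : DM le) : dm_is_inf (pair2 X Y) (dm_meet X Y).
Proof.
  split.
  - intros W [-> | ->]; [apply dm_meet_l | apply dm_meet_r].
  - intros S HS; apply dm_meet_glb; apply HS; [left | right]; reflexivity.
Qed.

Lemma dm_complete (F : DM le -> Prop) :
  (exists S, dm_is_sup F S) /\ (exists I, dm_is_inf F I).
Proof.
  split.
  - pose (U := fun x => exists X : DM le, F X /\ proj1_sig X x).
    exists (exist _ (Lb le (Ub le U)) (LUL_closed le (Ub le U))); split.
    + intros X HX x Hx; apply mem_LU; exists X; auto.
    + intros S HS x Hx; apply (proj1 (proj2_sig S x)).
      intros m Hm; apply Hx; intros y [X [HX Hy]]; exact (Hm y (HS X HX y Hy)).
  - assert (Hclosed : dm_closed le (fun x => forall X : DM le, F X -> proj1_sig X x)).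
    { intro x; split.
      - intros H X HX; apply (proj1 (proj2_sig X x)).
        intros m Hm; apply H; intros y Hy; exact (Hm y (Hy X HX)).
      - intro H; apply mem_LU; exact H. }
    exists (exist _ _ Hclosed); split.
    + intros X HX x Hx; exact (Hx X HX).
    + intros S HS x Hx X HX; exact (HS X HX x Hx).
Qed.

Lemma dm_lower_closed (le_trans : forall x y w, le x y -> le y w -> le x w)
  (X : DM le) {x t : T} : proj1_sig X x -> le t x -> proj1_sig X t.
Proof.
  destruct X as [X HX]; simpl; intros Hx Ht.
  apply HX; intros u Hu; exact (le_trans t x u Ht (Hu x Hx)).
Qed.

Lemma dm_compl_antitone (c : T -> T) (X Y : DM le) :
  dm_le X Y -> dm_le (dm_compl c Y) (dm_compl c X).
Proof. intros H x Hx m [v [Hv ->]]; apply Hx; exists v; auto. Qed.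

Lemma dm_compl_involutive (c : T -> T)
  (c_anti : forall x y, le x y -> le (c y) (c x)) (c_inv : forall x, c (c x) = x)
  (X : DM le) : dm_compl c (dm_compl c X) = X.
Proof.
  apply dm_ext; intro t; simpl; split.
  - destruct X as [X HX]; simpl; intro H.
    apply HX; intros m Hm.
    rewrite <- (c_inv m); apply H; exists (c m); split; [|rewrite c_inv; reflexivity].
    intros u [v [Hv ->]]; apply c_anti, Hm, Hv.
  - intros Ht m [v [Hv ->]].
    rewrite <- (c_inv t); apply c_anti, Hv; exists t; auto.
Qed.

Lemma dm_meet_compl (c : T -> T)
  (le_compl_least : forall t, le t (c t) -> forall x, le t x)
  (X : DM le) : dm_meet X (dm_compl c X) = dm_bot le.
Proof.
  apply dm_ext; intro t; simpl; split.
  - intros [Ht Htc] x _; apply le_compl_least, Htc; exists t; auto.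
  - intro H; split.
    + apply (proj1 (proj2_sig X t)); intros u _; apply H; exact I.
    + intros m _; apply H; exact I.
Qed.

End DMLattice.

Section Orthomodular.

Context {T : Type} {le : T -> T -> Prop} {c : T -> T}.

Hypothesis compl_invol : forall X : DM le, dm_compl c (dm_compl c X) = X.
Hypothesis meet_compl : forall X : DM le, dm_meet X (dm_compl c X) = dm_bot le.
Hypothesis orthomodular_criterion : forall Y W : DM le,
  dm_le Y W -> dm_meet W (dm_compl c Y) = dm_bot le -> W = Y.

Lemma dm_le_compl (X Y : DM le) : dm_le X (dm_compl c Y) -> dm_le Y (dm_compl c X).
Proof. intro H; rewrite <- (compl_invol Y); apply dm_compl_antitone, H. Qed.

Lemma dm_compl_join (X Y : DM le) :
  dm_compl c (dm_join X Y) = dm_meet (dm_compl c X) (dm_compl c Y).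
Proof.
  apply dm_le_antisym.
  - apply dm_meet_glb; apply dm_compl_antitone; [apply dm_join_l | apply dm_join_r].
  - apply dm_le_compl, dm_join_lub; apply dm_le_compl; [apply dm_meet_l | apply dm_meet_r].
Qed.

Lemma dm_compl_meet (X Y : DM le) :
  dm_compl c (dm_meet X Y) = dm_join (dm_compl c X) (dm_compl c Y).
Proof.
  rewrite <- (compl_invol X) at 1; rewrite <- (compl_invol Y) at 1.
  rewrite <- dm_compl_join; apply compl_invol.
Qed.

Lemma dm_compl_top : dm_compl c (dm_top le) = dm_bot le.
Proof.
  apply dm_le_antisym; [|apply dm_bot_le].
  rewrite <- (meet_compl (dm_top le)); apply dm_meet_glb; [apply dm_le_top | apply dm_le_refl].
Qed.

Lemma dm_join_compl (X : DM le) : dm_join X (dm_compl c X) = dm_top le.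
Proof.
  rewrite <- (compl_invol (dm_join X _)), dm_compl_join, compl_invol.
  rewrite <- (compl_invol X) at 2; rewrite meet_compl, <- dm_compl_top.
  apply compl_invol.
Qed.

Lemma dm_orthomodular (Y W : DM le) :
  dm_le Y W -> W = dm_join (dm_meet W (dm_compl c Y)) Y.
Proof.
  intro HYW; apply orthomodular_criterion.
  - apply dm_join_lub; [apply dm_meet_l | exact HYW].
  - apply dm_le_antisym; [|apply dm_bot_le].
    rewrite <- (meet_compl (dm_join (dm_meet W (dm_compl c Y)) Y)).
    apply dm_meet_glb; [|apply dm_meet_r].
    apply dm_le_trans with (dm_meet W (dm_compl c Y)); [|apply dm_join_l].
    apply dm_meet_glb; [apply dm_meet_l|].
    apply dm_le_trans with (dm_compl c (dm_join (dm_meet W (dm_compl c Y)) Y));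
      [apply dm_meet_r | apply dm_compl_antitone, dm_join_r].
Qed.

Lemma dm_orthomodular_dual (A Y : DM le) :
  dm_le A Y -> dm_meet (dm_join A (dm_compl c Y)) Y = A.
Proof.
  intro HAY.
  pose proof (f_equal (dm_compl c)
                (dm_orthomodular _ _ (dm_compl_antitone c _ _ HAY))) as E.
  rewrite compl_invol, dm_compl_join, dm_compl_meet, !compl_invol in E.
  symmetry; exact E.
Qed.

Lemma dm_odot_top_r (X : DM le) : dm_odot c X (dm_top le) = X.
Proof. unfold dm_odot; rewrite dm_compl_top, dm_join_bot_r; apply dm_meet_top_r. Qed.

Lemma dm_odot_top_l (X : DM le) : dm_odot c (dm_top le) X = X.
Proof. unfold dm_odot; rewrite dm_join_top_l; apply dm_meet_top_l. Qed.

Lemma dm_odot_residuated (X Y Z : DM le) :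
  dm_le (dm_odot c X Y) Z <-> dm_le X (dm_impl c Y Z).
Proof.
  unfold dm_odot, dm_impl; split; intro H.
  - apply dm_le_trans with (dm_join X (dm_compl c Y)); [apply dm_join_l|].
    rewrite (dm_orthomodular (dm_compl c Y) _ (dm_join_r _ _)), compl_invol.
    apply dm_join_lub; [|apply dm_join_r].
    apply dm_le_trans with (dm_meet Y Z); [|apply dm_join_l].
    apply dm_meet_glb; [apply dm_meet_r | exact H].
  - apply dm_le_trans with (dm_meet Y Z); [|apply dm_meet_r].
    rewrite <- (dm_orthomodular_dual (dm_meet Y Z) Y (dm_meet_l _ _)).
    apply dm_meet_glb; [|apply dm_meet_r].
    apply dm_le_trans with (dm_join X (dm_compl c Y)); [apply dm_meet_l|].
    apply dm_join_lub; [exact H | apply dm_join_r].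
Qed.

End Orthomodular.

Lemma boolean_le_of_compl_disjoint {T : Type} {A : T -> Prop} {le : T -> T -> Prop}
  {c : T -> T} {z o w u : T} :
  boolean_poset_on A le c z o -> A w -> A u ->
  (forall t, A t -> le t w -> le t (c u) -> t = z) -> le w u.
Proof.
  intros [[_ [_ [Hrefl [_ [_ Hbnd]]]]] [[Hc [_ [_ [_ HU]]]] Hdistr]] Hw Hu Hdisj.
  (* w = w /\ (u \/ u') = (w /\ u) \/ (w /\ u') = w /\ u, since w /\ u' = 0 *)
  assert (Hw_lhs : LA A le (union (UA A le (pair2 u (c u))) (single w)) w).
  { split; [exact Hw|]. intros m [Hm | Hm].
    - rewrite (proj1 (HU u Hu m) Hm); exact (proj2 (Hbnd w Hw)).
    - rewrite Hm; exact (Hrefl w Hw). }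
  apply (proj1 (Hdistr u (c u) w Hu (Hc u Hu) Hw w) Hw_lhs).
  split; [exact Hu|].
  intros m [[Hm Hmb] | [Hm Hmb]].
  - apply Hmb; left; reflexivity.
  - rewrite (Hdisj m Hm (Hmb w (or_intror eq_refl)) (Hmb (c u) (or_introl eq_refl))).
    exact (proj1 (Hbnd u Hu)).
Qed.

Section HorizontalSum.

Context {T Lambda : Type} {le : T -> T -> Prop} {c : T -> T} {z o : T}
  {P : Lambda -> T -> Prop}.

Hypothesis HS : horizontal_sum_of le c z o P.

Lemma hs_le_refl x : le x x.
Proof. destruct HS as [[_ [_ [H _]]] _]; exact (H x I). Qed.

Lemma hs_le_antisym x y : le x y -> le y x -> x = y.
Proof. destruct HS as [[_ [_ [_ [H _]]]] _]; exact (H x y I I). Qed.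

Lemma hs_le_trans x y w : le x y -> le y w -> le x w.
Proof. destruct HS as [[_ [_ [_ [_ [H _]]]]] _]; exact (H x y w I I I). Qed.

Lemma hs_z_le x : le z x.
Proof. destruct HS as [[_ [_ [_ [_ [_ H]]]]] _]; exact (proj1 (H x I)). Qed.

Lemma hs_le_o x : le x o.
Proof. destruct HS as [[_ [_ [_ [_ [_ H]]]]] _]; exact (proj2 (H x I)). Qed.

Lemma hs_boolean i : boolean_poset_on (P i) le c z o.
Proof. destruct HS as [_ [H _]]; exact (H i). Qed.

Lemma hs_block x : exists i, P i x.
Proof. destruct HS as [_ [_ [H _]]]; exact (H x). Qed.

Lemma hs_block_overlap i j x : i <> j -> P i x -> P j x -> x = z \/ x = o.
Proof. destruct HS as [_ [_ [_ [H _]]]]; exact (H i j x). Qed.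

Lemma hs_le_cases x y : le x y -> x = z \/ y = o \/ exists i, P i x /\ P i y.
Proof. destruct HS as [_ [_ [_ [_ H]]]]; exact (H x y). Qed.

Lemma hs_compl_invol x : c (c x) = x.
Proof.
  destruct (hs_block x) as [i Hi].
  destruct (hs_boolean i) as [_ [[_ [_ [H _]]] _]]; auto.
Qed.

Lemma hs_compl_z : c z = o.
Proof.
  destruct (hs_block z) as [i Hi].
  destruct (hs_boolean i) as [_ [[Hc [_ [_ [_ HU]]]] _]].
  apply (HU z Hi (c z)); split; [exact (Hc z Hi)|].
  intros m [-> | ->]; [apply hs_z_le | apply hs_le_refl].
Qed.

Lemma hs_compl_o : c o = z.
Proof. rewrite <- hs_compl_z; apply hs_compl_invol. Qed.

Lemma hs_compl_antitone x y : le x y -> le (c y) (c x).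
Proof.
  intro Hxy; destruct (hs_le_cases x y Hxy) as [-> | [-> | [i [Hx Hy]]]].
  - rewrite hs_compl_z; apply hs_le_o.
  - rewrite hs_compl_o; apply hs_z_le.
  - destruct (hs_boolean i) as [_ [[_ [H _]] _]]; auto.
Qed.

Lemma hs_le_compl_least t : le t (c t) -> forall x, le t x.
Proof.
  intros Ht x.
  destruct (hs_block t) as [i Hi].
  destruct (hs_boolean i) as [_ [[_ [_ [_ [HL _]]]] _]].
  rewrite (proj1 (HL t Hi t)); [apply hs_z_le|].
  split; [exact Hi|]; intros m [-> | ->]; [apply hs_le_refl | exact Ht].
Qed.

Lemma hs_common_ub_eq_o {w y u v : T} :
  w <> z -> y <> z -> u <> o -> le y u -> ~ (exists i, P i w /\ P i u) ->
  le w v -> le y v -> v = o.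
Proof.
  intros Hwz Hyz Huo Hyu Hwu Hwv Hyv.
  destruct (hs_le_cases y u Hyu) as [? | [? | [j [Hyj Huj]]]]; [contradiction | contradiction |].
  destruct (hs_le_cases w v Hwv) as [? | [Hv | [k [Hwk Hvk]]]]; [contradiction | exact Hv |].
  destruct (hs_le_cases y v Hyv) as [? | [Hv | [l [Hyl Hvl]]]]; [contradiction | exact Hv |].
  destruct (classic (k = l)) as [<- | Hkl].
  - destruct (classic (k = j)) as [<- | Hkj]; [exfalso; eauto|].
    destruct (hs_block_overlap k j y Hkj Hyl Hyj) as [? | Hy]; [contradiction|].
    exfalso; apply Huo, hs_le_antisym; [apply hs_le_o | rewrite <- Hy; exact Hyu].
  - destruct (hs_block_overlap k l v Hkl Hvk Hvl) as [Hv | Hv]; [|exact Hv].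
    exfalso; apply Hwz, hs_le_antisym; [rewrite <- Hv; exact Hwv | apply hs_z_le].
Qed.

Lemma hs_dm_compl_invol (X : DM le) : dm_compl c (dm_compl c X) = X.
Proof. exact (dm_compl_involutive c hs_compl_antitone hs_compl_invol X). Qed.

Lemma hs_dm_meet_compl (X : DM le) : dm_meet X (dm_compl c X) = dm_bot le.
Proof. exact (dm_meet_compl c hs_le_compl_least X). Qed.

Lemma hs_dm_orthomodular_criterion (Y W : DM le) :
  dm_le Y W -> dm_meet W (dm_compl c Y) = dm_bot le -> W = Y.
Proof.
  intros HYW Hbot.
  assert (HW_perp : forall t, proj1_sig W t ->
                      (forall v, proj1_sig Y v -> le t (c v)) -> t = z).
  { intros t Ht Hperp.
    assert (Hin : proj1_sig (dm_meet W (dm_compl c Y)) t).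
    { split; [exact Ht|]; intros m [v [Hv ->]]; exact (Hperp v Hv). }
    rewrite Hbot in Hin; apply hs_le_antisym; [exact (Hin z I) | apply hs_z_le]. }
  apply dm_le_antisym; [|exact HYW].
  intros w Hw; apply (proj1 (proj2_sig Y w)); intros u Hu.
  assert (Hu_perp : forall t, le t (c u) -> forall v, proj1_sig Y v -> le t (c v)).
  { intros t Ht v Hv; apply hs_le_trans with (c u); [exact Ht | apply hs_compl_antitone, Hu, Hv]. }
  destruct (classic (u = o)) as [-> | Huo]; [apply hs_le_o|].
  destruct (classic (w = z)) as [-> | Hwz]; [apply hs_z_le|].
  destruct (classic (exists i, P i w /\ P i u)) as [[i [Hwi Hui]] | Hwu].
  - apply (boolean_le_of_compl_disjoint (hs_boolean i) Hwi Hui).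
    intros t _ Htw Htu; apply HW_perp;
      [exact (dm_lower_closed hs_le_trans W Hw Htw) | exact (Hu_perp t Htu)].
  - exfalso.
    destruct (classic (exists y, proj1_sig Y y /\ y <> z)) as [[y [Hy Hyz]] | HY0].
    + assert (HW_full : forall t, proj1_sig W t).
      { intro t; apply (proj1 (proj2_sig W t)); intros v Hv.
        rewrite (hs_common_ub_eq_o Hwz Hyz Huo (Hu y Hy) Hwu (Hv w Hw) (Hv y (HYW y Hy))).
        apply hs_le_o. }
      apply Huo; rewrite <- (hs_compl_invol u).
      rewrite (HW_perp (c u) (HW_full _) (Hu_perp _ (hs_le_refl _))); exact hs_compl_z.
    + apply Hwz, HW_perp; [exact Hw|]; intros v Hv.
      destruct (classic (v = z)) as [-> | Hvz]; [rewrite hs_compl_z; apply hs_le_o|].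
      exfalso; apply HY0; exists v; auto.
Qed.

End HorizontalSum.

Theorem corollary1 (T : Type) (le : T -> T -> Prop) (c : T -> T) (z o : T)
  (Lambda : Type) (P : Lambda -> T -> Prop) :
  horizontal_sum_of le c z o P ->
  (* DM(P), ordered by inclusion, is a complete lattice *)
  (forall F : DM le -> Prop, (exists S, dm_is_sup F S) /\ (exists I, dm_is_inf F I)) /\
  (forall X Y : DM le, dm_is_sup (pair2 X Y) (dm_join X Y) /\
                       dm_is_inf (pair2 X Y) (dm_meet X Y)) /\
  (* X |-> X' is a complementation *)
  (forall X Y : DM le, dm_le X Y -> dm_le (dm_compl c Y) (dm_compl c X)) /\
  (forall X : DM le, dm_compl c (dm_compl c X) = X) /\
  (forall X : DM le, dm_meet X (dm_compl c X) = dm_bot le /\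
                     dm_join X (dm_compl c X) = dm_top le) /\
  (* orthomodularity *)
  (forall X Y : DM le,
     dm_join X Y = dm_join (dm_meet (dm_join X Y) (dm_compl c Y)) Y) /\
  (* left residuation w.r.t. x.y = (x v y') ^ y and x -> y = (x ^ y) v x' *)
  (forall X : DM le, dm_odot c X (dm_top le) = X /\ dm_odot c (dm_top le) X = X) /\
  (forall X Y Z : DM le, dm_le (dm_odot c X Y) Z <-> dm_le X (dm_impl c Y Z)).
Proof.
  intro HS.
  pose proof (hs_dm_compl_invol HS) as Hinv.
  pose proof (hs_dm_meet_compl HS) as Hmeet.
  pose proof (hs_dm_orthomodular_criterion HS) as Hcrit.
  split; [exact dm_complete|].
  split; [intros X Y; split; [apply dm_join_is_sup | apply dm_meet_is_inf]|].
  split; [exact (dm_compl_antitone c)|].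
  split; [exact Hinv|].
  split; [intro X; split; [apply Hmeet | apply (dm_join_compl Hinv Hmeet)]|].
  split; [intros X Y; apply (dm_orthomodular Hmeet Hcrit), dm_join_r|].
  split; [intro X; split; [apply (dm_odot_top_r Hmeet) | apply dm_odot_top_l]|].
  exact (dm_odot_residuated Hinv Hmeet Hcrit).
Qed.
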